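(* Let $C(\cdot,t)$, $t\in[0,T)$, be a smooth family of closed curves in $\mathbb{R}^2$ with centro-affine arc-length $\xi$ and centro-affine curvature $\varphi$, and suppose $\varphi$ satisfies $$\frac{\partial\varphi}{\partial t}=\frac12\varphi_{\xi\xi}-\frac12\varphi^3+2\varphi$$ for $t\in[0,T)$. Then $\varphi$ is bounded on $[0,T)$; more precisely, $$\min\{-2,\varphi_{\min}(0)\}\le\varphi(p,t)\le\max\{2,\varphi_{\max}(0)\},$$ where $\varphi_{\max}(t)=\sup_p\varphi(p,t)$ and $\varphi_{\min}(t)=\inf_p\varphi(p,t)$.
   Context: For $u,v\in\mathbb{R}^2$, $[u,v]$ denotes the determinant of the matrix with columns $u,v$. Each curve $C(\cdot,t):S^1\to\mathbb{R}^2$ is smooth, closed, with $[C,C_p]\neq0$, $[C_p,C_{pp}]\neq0$ (then $[C_p,C_{pp}]/[C,C_p]>0$). The centro-affine metric is $g=\sqrt{[C_p,C_{pp}]/[C,C_p]}$, centro-affine arc-length $\xi(p)=\int_{p_0}^p g\,dp$ (so $\partial_\xi=g^{-1}\partial_p$), and centro-affine curvature $\varphi=[C_{\xi\xi},C]/[C_\xi,C]$. *)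

From Stdlib Require Import Reals List.
From Coquelicot Require Export Coquelicot.
Open Scope R_scope.

Definition det2 (u v : R * R) : R := fst u * snd v - snd u * fst v.

(* iterated partial derivatives of a scalar function f(p,t):
   true = derivative in p, false = derivative in t *)
Fixpoint pd (l : list bool) (f : R -> R -> R) : R -> R -> R :=
  match l with
  | nil => f
  | b :: l' =>
      if b then (fun p t => Derive (fun q => pd l' f q t) p)
      else (fun p t => Derive (fun s => pd l' f p s) t)
  end.

Definition smooth_on (U : R -> R -> Prop) (f : R -> R -> R) : Prop :=
  forall (l : list bool) (p t : R), U p t ->
    ex_derive (fun q => pd l f q t) p /\
    ex_derive (fun s => pd l f p s) t /\
    continuous (fun z : R * R => pd l f (fst z) (snd z)) (p, t).

Definition dpv (C : R -> R -> R * R) (p t : R) : R * R :=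
  (Derive (fun q => fst (C q t)) p, Derive (fun q => snd (C q t)) p).
Definition dppv (C : R -> R -> R * R) (p t : R) : R * R :=
  (Derive (fun q => fst (dpv C q t)) p, Derive (fun q => snd (dpv C q t)) p).

Definition ca_metric (C : R -> R -> R * R) (p t : R) : R :=
  sqrt (det2 (dpv C p t) (dppv C p t) / det2 (C p t) (dpv C p t)).

Definition dxi (C : R -> R -> R * R) (f : R -> R -> R) (p t : R) : R :=
  Derive (fun q => f q t) p / ca_metric C p t.

Definition Cxi (C : R -> R -> R * R) (p t : R) : R * R :=
  (dxi C (fun q s => fst (C q s)) p t, dxi C (fun q s => snd (C q s)) p t).
Definition Cxixi (C : R -> R -> R * R) (p t : R) : R * R :=
  (dxi C (fun q s => fst (Cxi C q s)) p t, dxi C (fun q s => snd (Cxi C q s)) p t).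

Definition ca_curv (C : R -> R -> R * R) (p t : R) : R :=
  det2 (Cxixi C p t) (C p t) / det2 (Cxi C p t) (C p t).

Definition Rbar_max' (x y : Rbar) : Rbar :=
  match Rbar_le_dec x y with left _ => y | right _ => x end.

(* The squared metric [C_p, C_pp] / [C, C_p] is continuous and nowhere zero on
   R x [0,T), so it has a constant sign.  If it is negative, the metric and hence
   phi vanish identically.  Otherwise phi is an explicit expression in the
   p-derivatives of C up to order 3, so it is jointly continuous, differentiable
   in t, and smooth and 1-periodic in p.  At a spatial maximum phi_xixi <= 0, so
   where phi > 2 the equation gives phi_t <= - phi (phi^2 - 4) / 2 < 0: the
   spatial maximum cannot rise above max(2, phi_max(0)).  The lower bound is the
   same argument applied to -phi, which satisfies the same equation. *)

From Stdlib Require Import Reals Lra Lia List.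
From Coquelicot Require Import Coquelicot.
Open Scope R_scope.

Fixpoint derivable_n (n : nat) (f : R -> R) : Prop :=
  match n with
  | O => True
  | S n => (forall x, ex_derive f x) /\ derivable_n n (Derive f)
  end.

Lemma derivable_n_ext n : forall f g, (forall x, f x = g x) ->
  derivable_n n f -> derivable_n n g.
Proof.
  induction n as [|n IH]; intros f g E Hf; [exact I|].
  destruct Hf as [Hf HDf]; split.
  - intro x; apply (ex_derive_ext f); auto.
  - apply (IH (Derive f)); auto. intro x; apply Derive_ext; auto.
Qed.

Lemma derivable_n_pred n : forall f, derivable_n (S n) f -> derivable_n n f.
Proof.
  induction n as [|n IH]; intros f [Hf HDf]; [exact I|].
  split; auto.
Qed.

Lemma derivable_n_const n : forall c, derivable_n n (fun _ => c).
Proof.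
  induction n as [|n IH]; intro c; [exact I|]. split.
  - intro; apply ex_derive_const.
  - apply (derivable_n_ext n (fun _ => 0)); auto.
    intro x; rewrite Derive_const; reflexivity.
Qed.

Lemma derivable_n_plus n : forall f g, derivable_n n f -> derivable_n n g ->
  derivable_n n (fun x => f x + g x).
Proof.
  induction n as [|n IH]; intros f g Hf Hg; [exact I|].
  destruct Hf as [Hf HDf], Hg as [Hg HDg]; split.
  - intro x; apply (ex_derive_plus f g); auto.
  - apply (derivable_n_ext n (fun x => Derive f x + Derive g x)); auto.
    intro x; rewrite Derive_plus; auto.
Qed.

Lemma derivable_n_opp n : forall f, derivable_n n f -> derivable_n n (fun x => - f x).
Proof.
  induction n as [|n IH]; intros f Hf; [exact I|].
  destruct Hf as [Hf HDf]; split.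
  - intro x; apply (ex_derive_opp f); auto.
  - apply (derivable_n_ext n (fun x => - Derive f x)); auto.
    intro x; rewrite Derive_opp; reflexivity.
Qed.

Lemma derivable_n_minus n f g : derivable_n n f -> derivable_n n g ->
  derivable_n n (fun x => f x - g x).
Proof. intros Hf Hg; apply derivable_n_plus, derivable_n_opp; auto. Qed.

Lemma derivable_n_mult n : forall f g, derivable_n n f -> derivable_n n g ->
  derivable_n n (fun x => f x * g x).
Proof.
  induction n as [|n IH]; intros f g Hf Hg; [exact I|].
  assert (Hf' := derivable_n_pred n f Hf). assert (Hg' := derivable_n_pred n g Hg).
  destruct Hf as [Hf HDf], Hg as [Hg HDg]; split.
  - intro x; apply ex_derive_mult; auto.
  - apply (derivable_n_ext n (fun x => Derive f x * g x + f x * Derive g x)).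
    + intro x; rewrite Derive_mult; auto.
    + apply derivable_n_plus; apply IH; auto.
Qed.

Lemma derivable_n_inv n : forall f, derivable_n n f -> (forall x, f x <> 0) ->
  derivable_n n (fun x => / f x).
Proof.
  induction n as [|n IH]; intros f Hf Hnz; [exact I|].
  assert (Hf' := derivable_n_pred n f Hf).
  destruct Hf as [Hf HDf]; split.
  - intro x; apply ex_derive_inv; auto.
  - apply (derivable_n_ext n (fun x => - (Derive f x * (/ f x * / f x)))).
    + intro x; rewrite Derive_inv; auto. field; auto.
    + apply derivable_n_opp, derivable_n_mult, derivable_n_mult; auto.
Qed.

Lemma derivable_n_div n f g : derivable_n n f -> derivable_n n g -> (forall x, g x <> 0) ->
  derivable_n n (fun x => f x / g x).
Proof. intros Hf Hg Hnz; apply derivable_n_mult, derivable_n_inv; auto. Qed.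

Lemma derivable_n_sqrt n : forall f, derivable_n n f -> (forall x, 0 < f x) ->
  derivable_n n (fun x => sqrt (f x)).
Proof.
  induction n as [|n IH]; intros f Hf Hpos; [exact I|].
  assert (Hf' := derivable_n_pred n f Hf).
  destruct Hf as [Hf HDf].
  assert (Hd : forall x, is_derive (fun x => sqrt (f x)) x (Derive f x / (2 * sqrt (f x)))).
  { intro x; apply is_derive_sqrt; auto. apply Derive_correct; auto. }
  split.
  - intro x; eexists; apply Hd.
  - apply (derivable_n_ext n (fun x => Derive f x / (2 * sqrt (f x)))).
    + intro x; symmetry; apply is_derive_unique, Hd.
    + apply derivable_n_div; auto.
      * apply derivable_n_mult; auto using derivable_n_const.
      * intro x; assert (0 < sqrt (f x)) by (apply sqrt_lt_R0; auto); lra.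
Qed.

Definition periodic (f : R -> R) : Prop := forall x, f (x + 1) = f x.

Lemma periodic_Derive f : periodic f -> periodic (Derive f).
Proof.
  intros Hf x. unfold Derive. f_equal. apply Lim_ext. intro h.
  replace (x + 1 + h) with (x + h + 1) by ring. rewrite !Hf; reflexivity.
Qed.

Lemma periodic_add_INR f : periodic f -> forall n x, f (x + INR n) = f x.
Proof.
  intros Hf n; induction n as [|n IH]; intro x.
  - rewrite Rplus_0_r; reflexivity.
  - rewrite S_INR, <- Rplus_assoc, Hf; apply IH.
Qed.

Lemma periodic_frac_part f : periodic f -> forall x, f (frac_part x) = f x.
Proof.
  intros Hf x. unfold frac_part. destruct (Z.le_gt_cases 0 (Int_part x)) as [Hk|Hk].
  - destruct (IZN _ Hk) as [n ->]. rewrite <- INR_IZR_INZ.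
    rewrite <- (periodic_add_INR f Hf n). f_equal; ring.
  - assert (Hk' : (0 <= - Int_part x)%Z) by lia. destruct (IZN _ Hk') as [n Hn].
    replace (IZR (Int_part x)) with (- INR n)
      by (rewrite INR_IZR_INZ, <- Hn, opp_IZR; ring).
    unfold Rminus; rewrite Ropp_involutive; apply periodic_add_INR; auto.
Qed.

Lemma periodic_argmax f : periodic f -> (forall x, 0 <= x <= 1 -> continuity_pt f x) ->
  exists q, 0 <= q <= 1 /\ forall x, f x <= f q.
Proof.
  intros Hf Hc. destruct (continuity_ab_maj f 0 1 ltac:(lra) Hc) as [q [Hmax Hq]].
  exists q; split; auto. intro x. rewrite <- (periodic_frac_part f Hf x).
  apply Hmax. destruct (base_fp x); lra.
Qed.

Lemma is_derive_diff_quot_pos f x D : is_derive f x D -> 0 < D ->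
  exists d, 0 < d /\ forall h, h <> 0 -> Rabs h < d -> 0 < (f (x + h) - f x) / h.
Proof.
  intros HD HDpos. apply is_derive_Reals in HD.
  destruct (HD D HDpos) as [d Hd]. exists d; split; [apply cond_pos|].
  intros h Hh0 Hh. specialize (Hd h Hh0 Hh). apply Rabs_def2 in Hd; lra.
Qed.

Lemma is_derive_left_max_ge0 f t D d : is_derive f t D -> 0 < d ->
  (forall s, t - d < s < t -> f s <= f t) -> 0 <= D.
Proof.
  intros HD Hd Hmax. destruct (Rle_or_lt 0 D) as [|HDneg]; [assumption|exfalso].
  destruct (is_derive_diff_quot_pos (fun s => - f s) t (- D)) as [e [He Hq]];
    [apply (is_derive_opp f); assumption | lra|].
  set (h := - Rmin d e / 2).
  assert (Hm : 0 < Rmin d e <= d /\ Rmin d e <= e)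
    by (split; [split; [apply Rmin_pos|apply Rmin_l]|apply Rmin_r]; lra).
  assert (Hh : h < 0) by (unfold h; lra).
  specialize (Hq h ltac:(lra) ltac:(rewrite Rabs_left; unfold h; lra)).
  specialize (Hmax (t + h) ltac:(unfold h; lra)).
  assert (E : - f (t + h) - - f t = (- f (t + h) - - f t) / h * h) by (field; lra).
  nra.
Qed.

Lemma is_derive_right_max_le0 f t D d : is_derive f t D -> 0 < d ->
  (forall s, t < s < t + d -> f s <= f t) -> D <= 0.
Proof.
  intros HD Hd Hmax. destruct (Rle_or_lt D 0) as [|HDpos]; [assumption|exfalso].
  destruct (is_derive_diff_quot_pos f t D HD HDpos) as [e [He Hq]].
  set (h := Rmin d e / 2).
  assert (Hm : 0 < Rmin d e <= d /\ Rmin d e <= e)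
    by (split; [split; [apply Rmin_pos|apply Rmin_l]|apply Rmin_r]; lra).
  assert (Hh : 0 < h) by (unfold h; lra).
  specialize (Hq h ltac:(lra) ltac:(rewrite Rabs_right; unfold h; lra)).
  specialize (Hmax (t + h) ltac:(unfold h; lra)).
  assert (E : f (t + h) - f t = (f (t + h) - f t) / h * h) by (field; lra).
  nra.
Qed.

Lemma Derive_max_eq0 f p : ex_derive f p -> (forall q, f q <= f p) -> Derive f p = 0.
Proof.
  intros Hf Hmax. assert (HD := Derive_correct f p Hf).
  apply Rle_antisym.
  - apply (is_derive_right_max_le0 f p _ 1); auto; lra.
  - apply (is_derive_left_max_ge0 f p _ 1); auto; lra.
Qed.

Lemma Derive2_max_le0 f p : (forall x, ex_derive f x) -> ex_derive (Derive f) p ->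
  (forall q, f q <= f p) -> Derive (Derive f) p <= 0.
Proof.
  intros Hf Hf2 Hmax. destruct (Rle_or_lt (Derive (Derive f) p) 0) as [|Hpos];
    [assumption|exfalso].
  destruct (is_derive_diff_quot_pos (Derive f) p _ (Derive_correct _ p Hf2) Hpos)
    as [d [Hd Hq]].
  rewrite (Derive_max_eq0 f p (Hf p) Hmax) in Hq.
  assert (Hincr : forall c, p < c < p + d -> 0 < Derive f c).
  { intros c Hc. specialize (Hq (c - p) ltac:(lra) ltac:(rewrite Rabs_right; lra)).
    replace (p + (c - p)) with c in Hq by ring.
    assert (E : Derive f c - 0 = (Derive f c - 0) / (c - p) * (c - p)) by (field; lra).
    nra. }
  destruct (MVT_cor2 f (Derive f) p (p + d / 2)) as [c [Hc1 Hc2]]; [lra| |].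
  - intros c _. apply is_derive_Reals, Derive_correct, Hf.
  - specialize (Hincr c ltac:(lra)). specialize (Hmax (p + d / 2)). nra.
Qed.

Lemma Derive_div_max_le0 f g p : (forall x, ex_derive f x) -> ex_derive (Derive f) p ->
  ex_derive g p -> 0 < g p -> (forall q, f q <= f p) ->
  Derive (fun q => Derive f q / g q) p / g p <= 0.
Proof.
  intros Hf Hf2 Hg Hgp Hmax.
  assert (Hinv : ex_derive (fun q => / g q) p) by (apply ex_derive_inv; auto; lra).
  unfold Rdiv. rewrite Derive_mult, (Derive_max_eq0 f p (Hf p) Hmax); auto.
  assert (H2 := Derive2_max_le0 f p Hf Hf2 Hmax).
  assert (0 < / g p) by (apply Rinv_0_lt_compat; auto).
  replace ((Derive (Derive f) p * / g p + 0 * Derive (fun x => / g x) p) * / g p)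
    with (Derive (Derive f) p * (/ g p * / g p)) by ring.
  assert (0 < / g p * / g p) by (apply Rmult_lt_0_compat; auto). nra.
Qed.

Lemma Derive_div_min_ge0 f g p : (forall x, ex_derive f x) -> ex_derive (Derive f) p ->
  ex_derive g p -> 0 < g p -> (forall q, f p <= f q) ->
  0 <= Derive (fun q => Derive f q / g q) p / g p.
Proof.
  intros Hf Hf2 Hg Hgp Hmin.
  assert (E : Derive (fun q => Derive (fun y => - f y) q / g q) p
            = - Derive (fun q => Derive f q / g q) p).
  { rewrite <- Derive_opp. apply Derive_ext. intro q. rewrite Derive_opp. unfold Rdiv; ring. }
  cut (Derive (fun q => Derive (fun y => - f y) q / g q) p / g p <= 0).
  { rewrite E. unfold Rdiv. lra. }
  apply Derive_div_max_le0; auto.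
  - intro x; apply (ex_derive_opp f); auto.
  - apply (ex_derive_ext (fun y => - Derive f y)); [intro; rewrite Derive_opp; auto|].
    apply (ex_derive_opp (Derive f)); auto.
  - intro q; specialize (Hmin q); lra.
Qed.

Lemma continuity_pt_slice_space (F : R -> R -> R) p t :
  continuous (fun z : R * R => F (fst z) (snd z)) (p, t) -> continuity_pt (fun q => F q t) p.
Proof.
  intro H. apply continuity_pt_filterlim.
  apply (continuous_comp_2 (fun q => q) (fun _ => t) F); auto using continuous_id, continuous_const.
Qed.

Lemma continuity_pt_slice_time (F : R -> R -> R) p t :
  continuous (fun z : R * R => F (fst z) (snd z)) (p, t) -> continuity_pt (fun s => F p s) t.
Proof.
  intro H. apply continuity_pt_filterlim.
  apply (continuous_comp_2 (fun _ => p) (fun s => s) F); auto using continuous_id, continuous_const.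
Qed.

Lemma Lub_Rbar_range_max (f : R -> R) q : (forall x, f x <= f q) ->
  Lub_Rbar (fun y => exists x, y = f x) = Finite (f q).
Proof.
  intro Hq. apply is_lub_Rbar_unique. split.
  - intros y [x ->]. apply Hq.
  - intros b Hb. apply Hb. exists q; reflexivity.
Qed.

Section PeriodicMaximumPrinciple.

Variables (F : R -> R -> R) (T : R).
Hypothesis F_periodic : forall t, 0 <= t < T -> periodic (fun q => F q t).
Hypothesis F_continuous : forall p t, 0 <= t < T ->
  continuous (fun z : R * R => F (fst z) (snd z)) (p, t).

Lemma spatial_argmax t : 0 <= t < T -> exists q, 0 <= q <= 1 /\ forall p, F p t <= F q t.
Proof.
  intro Ht. apply periodic_argmax; auto.
  intros x _. apply continuity_pt_slice_space, F_continuous; auto.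
Qed.

Definition spatial_max t : R := real (Lub_Rbar (fun y => exists q, y = F q t)).

Lemma spatial_max_eq t q : (forall p, F p t <= F q t) -> spatial_max t = F q t.
Proof.
  intro Hq. unfold spatial_max. rewrite (Lub_Rbar_range_max (fun p => F p t) q Hq).
  reflexivity.
Qed.

Lemma spatial_max_ge p t : 0 <= t < T -> F p t <= spatial_max t.
Proof.
  intro Ht. destruct (spatial_argmax t Ht) as [q [_ Hq]].
  rewrite (spatial_max_eq t q Hq). apply Hq.
Qed.

Lemma spatial_max_continuous_within t : 0 <= t < T ->
  forall eps, 0 < eps -> exists d, 0 < d /\ forall s, 0 <= s < T -> Rabs (s - t) < d ->
  Rabs (spatial_max s - spatial_max t) < eps.
Proof.
  intros Ht eps Heps.
  destruct (uniform_continuity_2d_1d F 0 1 t) with (eps := mkposreal eps Heps) as [d Hd].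
  { intros x _. apply continuity_2d_pt_filterlim, F_continuous; auto. }
  exists d; split; [apply cond_pos|]. intros s Hs Hst.
  assert (Hclose : forall q, 0 <= q <= 1 -> Rabs (F q s - F q t) < eps).
  { intros q Hq. apply Rabs_def2 in Hst.
    apply (Hd q t q s); auto; try lra. rewrite Rminus_diag, Rabs_R0. apply cond_pos. }
  destruct (spatial_argmax s Hs) as [qs [Hqs Hmaxs]].
  destruct (spatial_argmax t Ht) as [qt [Hqt Hmaxt]].
  rewrite (spatial_max_eq s qs Hmaxs), (spatial_max_eq t qt Hmaxt).
  specialize (Hmaxs qt). specialize (Hmaxt qs).
  destruct (Rabs_def2 _ _ (Hclose qs Hqs)), (Rabs_def2 _ _ (Hclose qt Hqt)).
  apply Rabs_def1; lra.
Qed.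

Lemma spatial_max_continuity_pt c : 0 <= c < T ->
  continuity_pt (fun s => spatial_max (Rmax 0 s)) c.
Proof.
  intros Hc. unfold continuity_pt, continue_in, limit1_in, limit_in; simpl; unfold R_dist.
  intros e He. destruct (spatial_max_continuous_within c Hc e He) as [d [Hd Hclose]].
  exists (Rmin d (T - c)); split; [apply Rmin_pos; lra|].
  intros y [_ Hy]. assert (Hmin := Rmin_l d (T - c)). assert (Hmin' := Rmin_r d (T - c)).
  apply Rabs_def2 in Hy. rewrite (Rmax_right 0 c) by lra.
  apply Hclose; unfold Rmax; destruct (Rle_dec 0 y); try apply Rabs_def1; lra.
Qed.

Lemma periodic_max_principle K M :
  (forall p t, 0 < t < T -> (forall q, F q t <= F p t) -> K < F p t ->
     exists D, is_derive (fun s => F p s) t D /\ D < 0) ->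
  K <= M -> (forall q, F q 0 <= M) -> forall p t, 0 <= t < T -> F p t <= M.
Proof.
  intros Hdecr HKM H0 p1 t1 Ht1. apply Rnot_lt_le. intro Hbad.
  (* extended constantly to s < 0 so that [continuity_ab_maj] applies on [0, t1] *)
  set (m := fun s => spatial_max (Rmax 0 s)).
  assert (Hm : forall s, 0 <= s -> m s = spatial_max s)
    by (intros s Hs; unfold m; rewrite Rmax_right; auto).
  destruct (continuity_ab_maj m 0 t1) as [ts [Hts Hts01]]; [lra| |].
  { intros c Hc. apply spatial_max_continuity_pt; lra. }
  assert (Hts' : 0 <= ts < T) by lra.
  destruct (spatial_argmax ts Hts') as [q [_ Hq]].
  assert (Hpeak : forall s, 0 <= s <= t1 -> spatial_max s <= F q ts).
  { intros s Hs. rewrite <- (spatial_max_eq ts q Hq), <- (Hm s), <- (Hm ts); try lra.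
    apply Hts; lra. }
  assert (Hhigh : M < F q ts).
  { apply Rlt_le_trans with (F p1 t1); [assumption|].
    apply Rle_trans with (spatial_max t1); [apply spatial_max_ge|apply Hpeak]; lra. }
  assert (Hts0 : 0 < ts).
  { destruct (Req_dec ts 0) as [->|]; [|lra]. specialize (H0 q); lra. }
  destruct (Hdecr q ts ltac:(lra) Hq ltac:(lra)) as [D [HD HDneg]].
  assert (0 <= D); [|lra].
  apply (is_derive_left_max_ge0 _ ts D ts HD Hts0). intros s Hs.
  apply Rle_trans with (spatial_max s); [apply spatial_max_ge|apply Hpeak]; lra.
Qed.

Lemma reaction_max_principle M :
  (forall p t, 0 < t < T -> (forall q, F q t <= F p t) ->
     exists L, L <= 0 /\
       is_derive (fun s => F p s) t (1 / 2 * L - 1 / 2 * F p t ^ 3 + 2 * F p t)) ->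
  2 <= M -> (forall q, F q 0 <= M) -> forall p t, 0 <= t < T -> F p t <= M.
Proof.
  intros Hreact. apply (periodic_max_principle 2 M).
  intros p t Ht Hmax Hbig. destruct (Hreact p t Ht Hmax) as [L [HL HD]].
  eexists; split; [exact HD|].
  assert (0 < F p t * (F p t * F p t - 4)) by (apply Rmult_lt_0_compat; nra).
  simpl; nra.
Qed.

End PeriodicMaximumPrinciple.

Lemma continuous_nonzero_same_sign f a b : a <= b ->
  (forall x, a <= x <= b -> continuity_pt f x) -> (forall x, a <= x <= b -> f x <> 0) ->
  0 < f a * f b.
Proof.
  intros Hab Hc Hnz.
  assert (Hroot : forall g, (forall x, a <= x <= b -> continuity_pt g x) ->
             g a < 0 -> 0 < g b -> exists x, a <= x <= b /\ g x = 0).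
  { intros g Hg Ha Hb. destruct (Req_dec a b) as [<-|Hab']; [lra|].
    destruct (Ranalysis5.IVT_interv g a b) as [x Hx]; auto; [lra|]. exists x; exact Hx. }
  destruct (Rdichotomy _ _ (Hnz a ltac:(lra))) as [Ha|Ha];
  destruct (Rdichotomy _ _ (Hnz b ltac:(lra))) as [Hb|Hb]; try nra; exfalso.
  - destruct (Hroot f) as [x [Hx Hfx]]; auto. apply (Hnz x Hx Hfx).
  - assert (Hc' : forall x, a <= x <= b -> continuity_pt (fun x => - f x) x)
      by (intros x Hx; apply continuity_pt_opp, Hc; auto).
    destruct (Hroot (fun x => - f x) Hc') as [x [Hx Hfx]]; try lra.
    apply (Hnz x Hx); lra.
Qed.

Lemma nonvanishing_sign_constant (G : R -> R -> R) T :
  (forall p t, 0 <= t < T -> continuous (fun z : R * R => G (fst z) (snd z)) (p, t)) ->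
  (forall p t, 0 <= t < T -> G p t <> 0) ->
  forall p t, 0 <= t < T -> 0 < G p t * G 0 0.
Proof.
  intros Hc Hnz p t Ht.
  assert (Hspace : 0 < G p t * G 0 t).
  { destruct (Rle_or_lt 0 p) as [Hp|Hp].
    - rewrite Rmult_comm.
      apply (continuous_nonzero_same_sign (fun q => G q t)); auto.
      intros x _; apply continuity_pt_slice_space, Hc; auto.
    - apply (continuous_nonzero_same_sign (fun q => G q t)); [lra| |auto].
      intros x _; apply continuity_pt_slice_space, Hc; auto. }
  assert (Htime : 0 < G 0 0 * G 0 t).
  { apply (continuous_nonzero_same_sign (fun s => G 0 s)); [lra| |].
    - intros s Hs; apply continuity_pt_slice_time, Hc; lra.
    - intros s Hs; apply Hnz; lra. }
  nra.
Qed.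

Lemma Rbar_max'_Lub_ge (S : R -> Prop) K x :
  (forall M, K <= M -> (forall y, S y -> y <= M) -> x <= M) ->
  Rbar_le x (Rbar_max' K (Lub_Rbar S)).
Proof.
  intro Hx. destruct (Lub_Rbar_correct S) as [Hub _]. revert Hub.
  unfold Rbar_max'. destruct (Lub_Rbar S) as [l| |]; intro Hub;
    destruct (Rbar_le_dec K _) as [HK|HK]; simpl in *; try tauto; apply Hx.
  - exact HK.
  - intros y Hy; exact (Hub y Hy).
  - lra.
  - intros y Hy; specialize (Hub y Hy); simpl in Hub; lra.
  - lra.
  - intros y Hy; exact (False_ind _ (Hub y Hy)).
Qed.

Lemma Rbar_min_Glb_le (S : R -> Prop) K x :
  (forall m, m <= K -> (forall y, S y -> m <= y) -> m <= x) ->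
  Rbar_le (Rbar_min K (Glb_Rbar S)) x.
Proof.
  intro Hx. destruct (Glb_Rbar_correct S) as [Hlb _]. revert Hlb.
  destruct (Glb_Rbar S) as [l| |]; intro Hlb; simpl; try tauto; apply Hx.
  - apply Rmin_l.
  - intros y Hy. specialize (Hlb y Hy); simpl in Hlb. assert (Rmin K l <= l) by apply Rmin_r. lra.
  - lra.
  - intros y Hy; exact (False_ind _ (Hlb y Hy)).
Qed.

Definition regular_at (F : R -> R -> R) (p t : R) : Prop :=
  continuous (fun z : R * R => F (fst z) (snd z)) (p, t) /\ ex_derive (fun s => F p s) t.

Lemma regular_at_const c p t : regular_at (fun _ _ => c) p t.
Proof. split; [apply continuous_const | apply ex_derive_const]. Qed.

Lemma regular_at_plus F G p t : regular_at F p t -> regular_at G p t ->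
  regular_at (fun p t => F p t + G p t) p t.
Proof.
  intros [HcF HdF] [HcG HdG]; split.
  - apply (continuous_plus (fun z : R * R => F (fst z) (snd z))
                           (fun z : R * R => G (fst z) (snd z))); auto.
  - apply (ex_derive_plus (fun s => F p s) (fun s => G p s)); auto.
Qed.

Lemma regular_at_minus F G p t : regular_at F p t -> regular_at G p t ->
  regular_at (fun p t => F p t - G p t) p t.
Proof.
  intros [HcF HdF] [HcG HdG]; split.
  - apply (continuous_minus (fun z : R * R => F (fst z) (snd z))
                            (fun z : R * R => G (fst z) (snd z))); auto.
  - apply (ex_derive_minus (fun s => F p s) (fun s => G p s)); auto.
Qed.

Lemma regular_at_mult F G p t : regular_at F p t -> regular_at G p t ->
  regular_at (fun p t => F p t * G p t) p t.
Proof.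
  intros [HcF HdF] [HcG HdG]; split.
  - apply (continuous_mult (fun z : R * R => F (fst z) (snd z))
                           (fun z : R * R => G (fst z) (snd z))); auto.
  - apply (ex_derive_mult (fun s => F p s) (fun s => G p s)); auto.
Qed.

Lemma regular_at_div F G p t : regular_at F p t -> regular_at G p t -> G p t <> 0 ->
  regular_at (fun p t => F p t / G p t) p t.
Proof.
  intros HF [HcG HdG] Hnz. apply regular_at_mult; auto. split.
  - apply (continuous_comp (fun z : R * R => G (fst z) (snd z)) Rinv); auto.
    apply continuous_Rinv; auto.
  - apply (ex_derive_inv (fun s => G p s)); auto.
Qed.

Lemma regular_at_sqrt F p t : regular_at F p t -> 0 < F p t ->
  regular_at (fun p t => sqrt (F p t)) p t.
Proof.
  intros [HcF HdF] Hpos; split.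
  - apply (continuous_comp (fun z : R * R => F (fst z) (snd z)) sqrt); auto.
    apply continuous_sqrt.
  - eexists. apply is_derive_sqrt; auto. apply Derive_correct; auto.
Qed.

Section SmoothFamily.

Variables (f : R -> R -> R) (T eps : R).
Hypothesis f_smooth : smooth_on (fun _ t => - eps < t < T) f.

Lemma pd_space_regular k p t : - eps < t < T -> regular_at (pd (repeat true k) f) p t.
Proof. intro Ht. destruct (f_smooth (repeat true k) p t Ht) as [_ [Hd Hc]]; split; auto. Qed.

Lemma pd_space_derivable n : forall k t, - eps < t < T ->
  derivable_n n (fun q => pd (repeat true k) f q t).
Proof.
  induction n as [|n IH]; intros k t Ht; [exact I|]. split.
  - intro q. apply (f_smooth (repeat true k) q t Ht).
  - apply (IH (S k) t Ht).
Qed.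

Lemma pd_space_periodic k t : periodic (fun q => f q t) ->
  periodic (fun q => pd (repeat true k) f q t).
Proof.
  intro Hf. induction k as [|k IH]; [exact Hf|].
  apply (periodic_Derive (fun q => pd (repeat true k) f q t)), IH.
Qed.

End SmoothFamily.

Definition xder (C : R -> R -> R * R) (k : nat) : R -> R -> R :=
  pd (repeat true k) (fun p t => fst (C p t)).
Definition yder (C : R -> R -> R * R) (k : nat) : R -> R -> R :=
  pd (repeat true k) (fun p t => snd (C p t)).

Definition ca_metric_sq (C : R -> R -> R * R) (p t : R) : R :=
  det2 (dpv C p t) (dppv C p t) / det2 (C p t) (dpv C p t).

(* [ca_curv] with every p-derivative expanded by the product, quotient and chain
   rules: A = [C_p, C_pp], B = [C, C_p], g is the metric and (dux, duy) = (C_p / g)_p. *)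
Definition ca_curv_of_jet (x0 x1 x2 x3 y0 y1 y2 y3 : R) : R :=
  let A := x1 * y2 - y1 * x2 in
  let B := x0 * y1 - y0 * x1 in
  let dA := x2 * y2 + x1 * y3 - (y2 * x2 + y1 * x3) in
  let dB := x1 * y1 + x0 * y2 - (y1 * x1 + y0 * x2) in
  let g := sqrt (A / B) in
  let dg := (dA * B - A * dB) / (B * B) / (2 * g) in
  let dux := (x2 * g - x1 * dg) / (g * g) in
  let duy := (y2 * g - y1 * dg) / (g * g) in
  (dux / g * y0 - duy / g * x0) / (x1 / g * y0 - y1 / g * x0).

Definition curv_jet (C : R -> R -> R * R) (p t : R) : R :=
  ca_curv_of_jet (xder C 0 p t) (xder C 1 p t) (xder C 2 p t) (xder C 3 p t)
                 (yder C 0 p t) (yder C 1 p t) (yder C 2 p t) (yder C 3 p t).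

Lemma is_derive_cross (f1 f2 g1 g2 : R -> R) df1 df2 dg1 dg2 p :
  is_derive f1 p df1 -> is_derive f2 p df2 -> is_derive g1 p dg1 -> is_derive g2 p dg2 ->
  is_derive (fun q => f1 q * f2 q - g1 q * g2 q) p
    (df1 * f2 p + f1 p * df2 - (dg1 * g2 p + g1 p * dg2)).
Proof.
  intros H1 H2 H3 H4. auto_derive.
  - repeat split; eexists; eauto.
  - replace (Derive (fun x => f1 x) p) with df1 by (symmetry; apply is_derive_unique, H1).
    replace (Derive (fun x => f2 x) p) with df2 by (symmetry; apply is_derive_unique, H2).
    replace (Derive (fun x => g1 x) p) with dg1 by (symmetry; apply is_derive_unique, H3).
    replace (Derive (fun x => g2 x) p) with dg2 by (symmetry; apply is_derive_unique, H4).
    ring.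
Qed.

Lemma Derive_div_sqrt_ratio (u A B : R -> R) p du dA dB :
  is_derive u p du -> is_derive A p dA -> is_derive B p dB -> B p <> 0 -> 0 < A p / B p ->
  Derive (fun q => u q / sqrt (A q / B q)) p =
  (du * sqrt (A p / B p)
     - u p * ((dA * B p - A p * dB) / (B p * B p) / (2 * sqrt (A p / B p))))
  / (sqrt (A p / B p) * sqrt (A p / B p)).
Proof.
  intros Hu HA HB HBz Hr.
  assert (Hg : 0 < sqrt (A p / B p)) by (apply sqrt_lt_R0; auto).
  apply is_derive_unique. unfold Rdiv at 1.
  auto_derive.
  - repeat split; try (eexists; eauto); auto; lra.
  - replace (Derive (fun x => u x) p) with du by (symmetry; apply is_derive_unique, Hu).
    replace (Derive (fun x => A x) p) with dA by (symmetry; apply is_derive_unique, HA).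
    replace (Derive (fun x => B x) p) with dB by (symmetry; apply is_derive_unique, HB).
    unfold Rdiv. field. split; auto; lra.
Qed.

Lemma ca_curv_jet_eq C p t :
  (forall k, ex_derive (fun q => xder C k q t) p) ->
  (forall k, ex_derive (fun q => yder C k q t) p) ->
  det2 (C p t) (dpv C p t) <> 0 -> 0 < ca_metric_sq C p t ->
  ca_curv C p t = curv_jet C p t.
Proof.
  intros Hx Hy HB Hr.
  assert (Hdx : forall k, is_derive (fun q => xder C k q t) p (xder C (S k) p t))
    by (intro k; apply (Derive_correct _ _ (Hx k))).
  assert (Hdy : forall k, is_derive (fun q => yder C k q t) p (yder C (S k) p t))
    by (intro k; apply (Derive_correct _ _ (Hy k))).
  assert (HdA := is_derive_cross _ _ _ _ _ _ _ _ p (Hdx 1%nat) (Hdy 2%nat) (Hdy 1%nat) (Hdx 2%nat)).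
  assert (HdB := is_derive_cross _ _ _ _ _ _ _ _ p (Hdx 0%nat) (Hdy 1%nat) (Hdy 0%nat) (Hdx 1%nat)).
  unfold ca_curv, Cxixi, Cxi, dxi, ca_metric. cbn [fst snd].
  erewrite (Derive_div_sqrt_ratio _ _ _ p (xder C 2 p t) _ _ _ HdA HdB HB Hr),
    (Derive_div_sqrt_ratio _ _ _ p (yder C 2 p t) _ _ _ HdA HdB HB Hr).
  - reflexivity.
  Unshelve.
  - exact (Hdx 1%nat).
  - exact (Hdy 1%nat).
Qed.

Lemma ca_curv_metric_eq0 C p t : ca_metric C p t = 0 -> ca_curv C p t = 0.
Proof.
  intro Hg. unfold ca_curv.
  replace (det2 (Cxi C p t) (C p t)) with 0; [unfold Rdiv; rewrite Rinv_0; ring|].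
  unfold det2, Cxi, dxi; cbn [fst snd]. rewrite Hg. unfold Rdiv; rewrite Rinv_0; ring.
Qed.

Lemma det_div_neq0 x0 x1 y0 y1 g : g <> 0 -> x0 * y1 - y0 * x1 <> 0 ->
  x1 / g * y0 - y1 / g * x0 <> 0.
Proof.
  intros Hg H E. apply H.
  replace (x0 * y1 - y0 * x1) with (- (x1 / g * y0 - y1 / g * x0) * g) by (field; auto).
  rewrite E; ring.
Qed.

Ltac regular_closure :=
  repeat match goal with
  | |- regular_at (fun p t => @?a p t / @?b p t) _ _ => apply (regular_at_div a b)
  | |- regular_at (fun p t => @?a p t - @?b p t) _ _ => apply (regular_at_minus a b)
  | |- regular_at (fun p t => @?a p t + @?b p t) _ _ => apply (regular_at_plus a b)
  | |- regular_at (fun p t => @?a p t * @?b p t) _ _ => apply (regular_at_mult a b)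
  | |- regular_at (fun p t => sqrt (@?a p t)) _ _ => apply (regular_at_sqrt a)
  | |- regular_at (fun p t => 2) _ _ => apply regular_at_const
  end.

Ltac derivable_closure :=
  repeat match goal with
  | |- derivable_n _ (fun q => @?a q / @?b q) => apply (derivable_n_div _ a b)
  | |- derivable_n _ (fun q => @?a q - @?b q) => apply (derivable_n_minus _ a b)
  | |- derivable_n _ (fun q => @?a q + @?b q) => apply (derivable_n_plus _ a b)
  | |- derivable_n _ (fun q => @?a q * @?b q) => apply (derivable_n_mult _ a b)
  | |- derivable_n _ (fun q => sqrt (@?a q)) => apply (derivable_n_sqrt _ a)
  | |- derivable_n _ (fun q => 2) => apply derivable_n_const
  end.

Ltac jet_side_condition HB Hr :=
  let Hg := fresh "Hg" in
  assert (Hg := sqrt_lt_R0 _ Hr); cbv beta;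
  repeat lazymatch goal with
  | |- _ * _ <> 0 => apply Rmult_integral_contrapositive_currified
  end;
  lazymatch goal with
  | |- 0 < _ => exact Hr
  | |- _ / _ * _ - _ / _ * _ <> 0 => apply det_div_neq0; [lra | exact HB]
  | |- _ - _ <> 0 => exact HB
  | |- _ <> 0 => lra
  end.

Section CurvatureFlow.

Variables (C : R -> R -> R * R) (T eps : R).
Hypothesis eps_pos : 0 < eps.
Hypothesis Cx_smooth : smooth_on (fun _ t => - eps < t < T) (fun p t => fst (C p t)).
Hypothesis Cy_smooth : smooth_on (fun _ t => - eps < t < T) (fun p t => snd (C p t)).
Hypothesis C_periodic : forall p t, 0 <= t < T -> C (p + 1) t = C p t.
Hypothesis B_neq0 : forall p t, 0 <= t < T -> det2 (C p t) (dpv C p t) <> 0.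
Hypothesis A_neq0 : forall p t, 0 <= t < T -> det2 (dpv C p t) (dppv C p t) <> 0.

Lemma jet_regular k p t : 0 <= t < T ->
  regular_at (xder C k) p t /\ regular_at (yder C k) p t.
Proof.
  intro Ht; split; [apply (pd_space_regular _ T eps) | apply (pd_space_regular _ T eps)];
    auto; lra.
Qed.

Lemma jet_derivable n k t : 0 <= t < T ->
  derivable_n n (fun q => xder C k q t) /\ derivable_n n (fun q => yder C k q t).
Proof.
  intro Ht; split; [apply (pd_space_derivable _ T eps) | apply (pd_space_derivable _ T eps)];
    auto; lra.
Qed.

Lemma jet_ex_derive k q t : 0 <= t < T ->
  ex_derive (fun q => xder C k q t) q /\ ex_derive (fun q => yder C k q t) q.
Proof.
  intro Ht. destruct (jet_derivable 1 k t Ht) as [[Hx _] [Hy _]]. auto.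
Qed.

Lemma jet_periodic k t : 0 <= t < T ->
  periodic (fun q => xder C k q t) /\ periodic (fun q => yder C k q t).
Proof.
  intro Ht; split; apply pd_space_periodic; intro q; rewrite C_periodic; auto.
Qed.

Lemma metric_sq_regular p t : 0 <= t < T -> regular_at (ca_metric_sq C) p t.
Proof.
  intro Ht. destruct (jet_regular 0 p t Ht), (jet_regular 1 p t Ht), (jet_regular 2 p t Ht).
  change (regular_at (fun p t =>
    (xder C 1 p t * yder C 2 p t - yder C 1 p t * xder C 2 p t)
    / (xder C 0 p t * yder C 1 p t - yder C 0 p t * xder C 1 p t)) p t).
  regular_closure; auto. apply B_neq0; auto.
Qed.

Lemma metric_sq_sign p t : 0 <= t < T -> 0 < ca_metric_sq C p t * ca_metric_sq C 0 0.
Proof.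
  apply nonvanishing_sign_constant.
  - intros q s Hs. apply (metric_sq_regular q s Hs).
  - intros q s Hs. unfold ca_metric_sq.
    apply Rmult_integral_contrapositive_currified; [apply A_neq0 | apply Rinv_neq_0_compat, B_neq0];
      auto.
Qed.

(* In Rocq [sqrt] of a negative number is [0], and so is division by [0]. *)
Lemma curv_degenerate p t : ca_metric_sq C 0 0 <= 0 -> 0 <= t < T -> ca_curv C p t = 0.
Proof.
  intros H00 Ht. apply ca_curv_metric_eq0, sqrt_neg_0.
  change (ca_metric_sq C p t <= 0). assert (H := metric_sq_sign p t Ht). nra.
Qed.

Hypothesis evolution : forall p t, 0 <= t < T ->
  Derive (fun s => ca_curv C p s) t =
    1 / 2 * dxi C (dxi C (ca_curv C)) p t - 1 / 2 * (ca_curv C p t) ^ 3 + 2 * ca_curv C p t.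

Section Nondegenerate.

Hypothesis metric_sq00_pos : 0 < ca_metric_sq C 0 0.

Lemma metric_sq_pos p t : 0 <= t < T -> 0 < ca_metric_sq C p t.
Proof. intro Ht. assert (H := metric_sq_sign p t Ht). nra. Qed.

Lemma jet_nondegenerate p t : 0 <= t < T ->
  xder C 0 p t * yder C 1 p t - yder C 0 p t * xder C 1 p t <> 0 /\
  0 < (xder C 1 p t * yder C 2 p t - yder C 1 p t * xder C 2 p t)
      / (xder C 0 p t * yder C 1 p t - yder C 0 p t * xder C 1 p t).
Proof. intro Ht; split; [apply B_neq0 | apply metric_sq_pos]; auto. Qed.

Ltac jet_regular_closure p t Ht :=
  let HB := fresh "HB" in let Hr := fresh "Hr" in
  destruct (jet_nondegenerate p t Ht) as [HB Hr];
  regular_closure;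
  lazymatch goal with
  | |- regular_at (fun _ _ => xder _ _ _ _) _ _ => apply (proj1 (jet_regular _ p t Ht))
  | |- regular_at (fun _ _ => yder _ _ _ _) _ _ => apply (proj2 (jet_regular _ p t Ht))
  | |- _ => jet_side_condition HB Hr
  end.

Ltac jet_derivable_closure t Ht :=
  derivable_closure;
  lazymatch goal with
  | |- derivable_n _ (fun _ => xder _ _ _ _) => apply (proj1 (jet_derivable _ _ t Ht))
  | |- derivable_n _ (fun _ => yder _ _ _ _) => apply (proj2 (jet_derivable _ _ t Ht))
  | |- _ => let x := fresh "x" in let HB := fresh "HB" in let Hr := fresh "Hr" in
            intro x; destruct (jet_nondegenerate x t Ht) as [HB Hr];
            jet_side_condition HB Hr
  end.

Lemma curv_eq_jet p t : 0 <= t < T -> ca_curv C p t = curv_jet C p t.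
Proof.
  intro Ht. apply ca_curv_jet_eq; try (intro k; apply (jet_ex_derive k p t Ht)).
  - apply B_neq0; auto.
  - apply metric_sq_pos; auto.
Qed.

Lemma curv_jet_regular p t : 0 <= t < T -> regular_at (curv_jet C) p t.
Proof.
  intro Ht. unfold curv_jet, ca_curv_of_jet; cbv zeta.
  jet_regular_closure p t Ht.
Qed.

Lemma curv_jet_periodic t : 0 <= t < T -> periodic (fun q => curv_jet C q t).
Proof.
  intros Ht q.
  assert (Hx : forall k, xder C k (q + 1) t = xder C k q t) by (intro k; apply jet_periodic, Ht).
  assert (Hy : forall k, yder C k (q + 1) t = yder C k q t) by (intro k; apply jet_periodic, Ht).
  unfold curv_jet; rewrite !Hx, !Hy; reflexivity.
Qed.

Lemma curv_slice_derivable t : 0 <= t < T -> derivable_n 2 (fun q => ca_curv C q t).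
Proof.
  intro Ht. apply (derivable_n_ext 2 (fun q => curv_jet C q t)).
  { intro q; symmetry; apply curv_eq_jet, Ht. }
  unfold curv_jet, ca_curv_of_jet; cbv zeta.
  jet_derivable_closure t Ht.
Qed.

Lemma metric_slice_derivable t : 0 <= t < T -> derivable_n 1 (fun q => ca_metric C q t).
Proof.
  intro Ht.
  change (derivable_n 1 (fun q => sqrt
    ((xder C 1 q t * yder C 2 q t - yder C 1 q t * xder C 2 q t)
     / (xder C 0 q t * yder C 1 q t - yder C 0 q t * xder C 1 q t)))).
  jet_derivable_closure t Ht.
Qed.

Lemma curv_xixi_at_max p t : 0 <= t < T -> (forall q, ca_curv C q t <= ca_curv C p t) ->
  dxi C (dxi C (ca_curv C)) p t <= 0.
Proof.
  intros Ht Hmax. destruct (curv_slice_derivable t Ht) as [Hf [Hf2 _]].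
  destruct (metric_slice_derivable t Ht) as [Hg _].
  apply (Derive_div_max_le0 (fun q => ca_curv C q t) (fun q => ca_metric C q t)); auto.
  apply sqrt_lt_R0, metric_sq_pos, Ht.
Qed.

Lemma curv_xixi_at_min p t : 0 <= t < T -> (forall q, ca_curv C p t <= ca_curv C q t) ->
  0 <= dxi C (dxi C (ca_curv C)) p t.
Proof.
  intros Ht Hmin. destruct (curv_slice_derivable t Ht) as [Hf [Hf2 _]].
  destruct (metric_slice_derivable t Ht) as [Hg _].
  apply (Derive_div_min_ge0 (fun q => ca_curv C q t) (fun q => ca_metric C q t)); auto.
  apply sqrt_lt_R0, metric_sq_pos, Ht.
Qed.

Lemma curv_jet_time_derive p t : 0 < t < T ->
  is_derive (fun s => curv_jet C p s) t
    (1 / 2 * dxi C (dxi C (ca_curv C)) p t - 1 / 2 * (ca_curv C p t) ^ 3 + 2 * ca_curv C p t).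
Proof.
  intro Ht. rewrite <- evolution by lra.
  assert (Hloc : locally t (fun s => curv_jet C p s = ca_curv C p s)).
  { apply (filter_imp (fun s => 0 < s < T)).
    - intros s Hs; symmetry; apply curv_eq_jet; lra.
    - apply (open_and _ _ (open_gt 0) (open_lt T)); auto. }
  assert (E : Derive (fun s => curv_jet C p s) t = Derive (fun s => ca_curv C p s) t)
    by (apply Derive_ext_loc, Hloc).
  rewrite <- E.
  apply Derive_correct, (curv_jet_regular p t ltac:(lra)).
Qed.

Lemma curv_jet_reaction p t : 0 < t < T -> (forall q, curv_jet C q t <= curv_jet C p t) ->
  exists L, L <= 0 /\ is_derive (fun s => curv_jet C p s) t
    (1 / 2 * L - 1 / 2 * curv_jet C p t ^ 3 + 2 * curv_jet C p t).
Proof.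
  intros Ht Hmax. exists (dxi C (dxi C (ca_curv C)) p t). split.
  - apply curv_xixi_at_max; [lra|]. intro q; rewrite !curv_eq_jet by lra; apply Hmax.
  - rewrite <- curv_eq_jet by lra. apply curv_jet_time_derive, Ht.
Qed.

Lemma neg_curv_jet_reaction p t : 0 < t < T ->
  (forall q, - curv_jet C q t <= - curv_jet C p t) ->
  exists L, L <= 0 /\ is_derive (fun s => - curv_jet C p s) t
    (1 / 2 * L - 1 / 2 * (- curv_jet C p t) ^ 3 + 2 * (- curv_jet C p t)).
Proof.
  intros Ht Hmin. exists (- dxi C (dxi C (ca_curv C)) p t). split.
  - assert (0 <= dxi C (dxi C (ca_curv C)) p t); [|lra].
    apply curv_xixi_at_min; [lra|]. intro q; rewrite !curv_eq_jet by lra.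
    specialize (Hmin q); lra.
  - rewrite <- curv_eq_jet by lra.
    eapply is_derive_ext; [intro s; reflexivity|].
    replace (1 / 2 * - dxi C (dxi C (ca_curv C)) p t - 1 / 2 * (- ca_curv C p t) ^ 3
               + 2 * - ca_curv C p t)
      with (- (1 / 2 * dxi C (dxi C (ca_curv C)) p t - 1 / 2 * ca_curv C p t ^ 3
               + 2 * ca_curv C p t)) by ring.
    apply (is_derive_opp (fun s => curv_jet C p s)), curv_jet_time_derive, Ht.
Qed.

Lemma curv_upper_bound M : 2 <= M -> (forall q, ca_curv C q 0 <= M) ->
  forall p t, 0 <= t < T -> ca_curv C p t <= M.
Proof.
  intros HM H0 p t Ht. rewrite curv_eq_jet by exact Ht.
  apply (reaction_max_principle (curv_jet C) T); auto.
  - intros s Hs; apply curv_jet_periodic, Hs.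
  - intros q s Hs; apply (curv_jet_regular q s Hs).
  - intros q s Hs Hmax; apply curv_jet_reaction; auto.
  - intro q; rewrite <- curv_eq_jet; [apply H0 | lra].
Qed.

Lemma curv_lower_bound m : m <= -2 -> (forall q, m <= ca_curv C q 0) ->
  forall p t, 0 <= t < T -> m <= ca_curv C p t.
Proof.
  intros Hm H0 p t Ht. rewrite curv_eq_jet by exact Ht.
  cut (- curv_jet C p t <= - m); [lra|].
  apply (reaction_max_principle (fun p t => - curv_jet C p t) T); auto; try lra.
  - intros s Hs q; f_equal; apply curv_jet_periodic, Hs.
  - intros q s Hs. apply (continuous_opp (fun z : R * R => curv_jet C (fst z) (snd z))).
    apply (curv_jet_regular q s Hs).
  - intros q s Hs Hmax; apply neg_curv_jet_reaction; auto.
  - intro q; rewrite <- curv_eq_jet by lra. specialize (H0 q); lra.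
Qed.

Lemma curv_initially_bounded : 0 < T -> exists M, forall q, Rabs (ca_curv C q 0) <= M.
Proof.
  intro HT. assert (H0 : 0 <= 0 < T) by lra.
  destruct (periodic_argmax (fun q => Rabs (curv_jet C q 0))) as [q0 [_ Hq0]].
  - intro q; rewrite curv_jet_periodic; auto.
  - intros q _. apply continuity_pt_filterlim, (continuous_comp (fun q => curv_jet C q 0) Rabs).
    + apply continuity_pt_filterlim, continuity_pt_slice_space, (curv_jet_regular q 0 H0).
    + apply continuous_Rabs.
  - exists (Rabs (curv_jet C q0 0)). intro q; rewrite curv_eq_jet; auto.
Qed.

End Nondegenerate.

Lemma curvature_pinching : 0 < T ->
  (forall M, 2 <= M -> (forall q, ca_curv C q 0 <= M) ->
     forall p t, 0 <= t < T -> ca_curv C p t <= M) /\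
  (forall m, m <= -2 -> (forall q, m <= ca_curv C q 0) ->
     forall p t, 0 <= t < T -> m <= ca_curv C p t) /\
  (exists M, forall q, Rabs (ca_curv C q 0) <= M).
Proof.
  intro HT. destruct (Rle_or_lt (ca_metric_sq C 0 0) 0) as [Hdeg|Hpos].
  - split; [|split].
    + intros M HM _ p t Ht. rewrite curv_degenerate; auto; lra.
    + intros m Hm _ p t Ht. rewrite curv_degenerate; auto; lra.
    + exists 0. intro q. rewrite curv_degenerate, Rabs_R0; auto; lra.
  - split; [|split].
    + apply curv_upper_bound; auto.
    + apply curv_lower_bound; auto.
    + apply curv_initially_bounded; auto.
Qed.

End CurvatureFlow.

Theorem lemma3p2 (C : R -> R -> R * R) (T : R) :
  (* smooth family on [0,T): restriction of a smooth map on R x (-eps,T) *)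
  (exists eps : R, 0 < eps /\
     smooth_on (fun _ t => - eps < t < T) (fun p t => fst (C p t)) /\
     smooth_on (fun _ t => - eps < t < T) (fun p t => snd (C p t))) ->
  (* closed curves, parametrized by S^1 = R/Z *)
  (forall p t, 0 <= t < T -> C (p + 1) t = C p t) ->
  (* nondegeneracy *)
  (forall p t, 0 <= t < T -> det2 (C p t) (dpv C p t) <> 0) ->
  (forall p t, 0 <= t < T -> det2 (dpv C p t) (dppv C p t) <> 0) ->
  (* evolution equation for phi *)
  (forall p t, 0 <= t < T ->
     Derive (fun s => ca_curv C p s) t =
       1 / 2 * dxi C (dxi C (ca_curv C)) p t
       - 1 / 2 * (ca_curv C p t) ^ 3 + 2 * ca_curv C p t) ->
  (exists M : R, forall p t, 0 <= t < T -> Rabs (ca_curv C p t) <= M) /\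
  (forall p t, 0 <= t < T ->
     Rbar_le (Rbar_min (Finite (-2)) (Glb_Rbar (fun y => exists q, y = ca_curv C q 0)))
             (Finite (ca_curv C p t)) /\
     Rbar_le (Finite (ca_curv C p t))
             (Rbar_max' (Finite 2) (Lub_Rbar (fun y => exists q, y = ca_curv C q 0)))).
Proof.
  intros [eps [Heps [HX HY]]] Hper HB HA Hev.
  destruct (Rle_or_lt T 0) as [HT|HT]; [split; [exists 0|]; intros; lra|].
  destruct (curvature_pinching C T eps Heps HX HY Hper HB HA Hev HT)
    as [Hup [Hlow [M0 HM0]]].
  split.
  - exists (Rmax 2 M0). intros p t Ht.
    assert (Hmax := Rmax_l 2 M0). assert (HM0' := Rmax_r 2 M0).
    apply Rabs_le; split.
    + apply Hlow; auto; [lra|]. intro q; destruct (proj1 (Rabs_le_between _ _) (HM0 q)); lra.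
    + apply Hup; auto. intro q; destruct (proj1 (Rabs_le_between _ _) (HM0 q)); lra.
  - intros p t Ht; split.
    + apply Rbar_min_Glb_le. intros m Hm Hlb.
      apply Hlow; auto. intro q; apply Hlb; exists q; reflexivity.
    + apply Rbar_max'_Lub_ge. intros M HM Hub.
      apply Hup; auto. intro q; apply Hub; exists q; reflexivity.
Qed.
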